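(* For every integer $m\ge 3$, the matrix $M_m$ defined below is $3$-decodable (whatever maximizing index $i$ is chosen at each step of the recursion).
   Context: Binary matrices $M_m$ with $m$ rows are defined recursively; write $c(\ell)$ for the number of columns of $M_\ell$, $I_3$ for the $3\times 3$ identity matrix. Let $M_3=[\,I_3\mid \mathbf{1}\,]$ ($3\times 4$, $\mathbf{1}$ the all-ones column). Let $M_4=\begin{bmatrix}\mathbf{0}_{1\times 3} & \mathbf{1}_{1\times 4}\\ I_3 & M_3\end{bmatrix}$ ($4\times 7$). For $m\ge 5$, choose $i\in\{2,\dots,m-3\}$ maximizing $i\cdot c(m-i)$, put $c=c(m-i)$, and let $M_m=[\,L\mid R\,]$, where $L$ is the $m\times 3$ matrix whose first $m-3$ rows are zero and whose last $3$ rows form $I_3$, and $R$ is the $m\times ic$ matrix whose first $i$ rows are such that row $r$ ($1\le r\le i$) has ones exactly in columns $(r-1)c+1,\dots,rc$, and whose last $m-i$ rows form $[\,M_{m-i}\ M_{m-i}\ \cdots\ M_{m-i}\,]$ ($i$ copies side by side). For a binary matrix $M$ and a nonempty set $S$ of its columns, $S$ is a stopping set if the submatrix formed by $S$ has no row with exactly one $1$; $s(M)$ is the minimum size of a stopping set ($+\infty$ if none); $M$ is $d$-decodable if $s(M)\ge d+1$. *)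

(* All row/column indices are 0-based. *)
From mathcomp Require Import all_boot all_order all_algebra.
Set Implicit Arguments. Unset Strict Implicit. Unset Printing Implicit Defensive.

(* Column count c(m) of M_m (well defined: the maximal value of i*c(m-i) does
   not depend on which maximizer is chosen).  [k] is fuel; ncols m := ccols m m.
   c(3) = 4, c(4) = 7, c(m) = 3 + max_{2<=i<=m-3} i * c(m-i) for m >= 5.
   (Values for m < 3 are junk and never used.) *)
Fixpoint ccols (k m : nat) : nat :=
  match k with
  | 0 => 0
  | k'.+1 =>
    if m <= 3 then 4 else if m == 4 then 7
    else 3 + \max_(2 <= i < m - 2) (i * ccols k' (m - i))
  end.
Definition ncols (m : nat) : nat := ccols m m.

Definition f3 (r col : nat) : bool := (col == r) || (col == 3).

Definition f4 (r col : nat) : bool :=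
  if r == 0 then 3 <= col
  else if col < 3 then col == r.-1 else f3 r.-1 (col - 3).

(* M_m = [L | R] built from i, c and (the entry function g of) M_{m-i}. *)
Definition fstep (m i c : nat) (g : nat -> nat -> bool) (r col : nat) : bool :=
  if col < 3 then (m - 3 <= r) && (col == r - (m - 3))
  else if r < i then (col - 3) %/ c == r
  else g (r - i) ((col - 3) %% c).

(* Mrec m n f : f (restricted to m rows, n columns) is one of the possible
   matrices M_m, for some choice of maximizing indices at each recursion step. *)
Inductive Mrec : nat -> nat -> (nat -> nat -> bool) -> Prop :=
| Mrec3 : Mrec 3 4 f3
| Mrec4 : Mrec 4 7 f4
| MrecS (m i c : nat) (g : nat -> nat -> bool) :
    5 <= m -> 2 <= i -> i <= m - 3 ->
    (forall j, 2 <= j -> j <= m - 3 -> j * ncols (m - j) <= i * ncols (m - i)) ->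
    c = ncols (m - i) ->
    Mrec (m - i) c g ->
    Mrec m (3 + i * c) (fstep m i c g).

Definition mx_of (m n : nat) (f : nat -> nat -> bool) : 'M[bool]_(m, n) :=
  \matrix_(r < m, col < n) f r col.

Definition stopping_set (m n : nat) (M : 'M[bool]_(m, n)) (S : {set 'I_n}) : Prop :=
  S != set0 /\ forall r : 'I_m, #|[set j in S | M r j]| != 1.

(* d-decodable: s(M) >= d+1, i.e. every stopping set has size >= d+1
   (vacuous when there is no stopping set, s(M) = +oo). *)
Definition decodable (d m n : nat) (M : 'M[bool]_(m, n)) : Prop :=
  forall S : {set 'I_n}, stopping_set M S -> d < #|S|.

(* A set of at most three columns fails to be a stopping set as soon as some
   row has exactly one 1 in it.  This is guaranteed by three properties of a
   0/1 matrix: every column contains a 1 (covering), two distinct columns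
   differ in some row (separating), three distinct columns have a row with
   exactly one 1 among them (triple_isolating).  Separation is required even
   after deleting any one of the last three rows, because in M_m these rows
   also carry the identity block L, which the recursive step must avoid. *)

From mathcomp Require Import all_boot all_order all_algebra.
From mathcomp Require Import zify.
Set Implicit Arguments. Unset Strict Implicit. Unset Printing Implicit Defensive.

Definition covering (m n : nat) (g : nat -> nat -> bool) : Prop :=
  forall a, a < n -> exists2 r, r < m & g r a.

(* Two distinct columns differ in some row, even after deleting any one of the
   last three rows (x >= m deletes nothing): no stopping set of size 2.  The
   robustness against deleting a bottom row is what the recursion needs. *)
Definition separating (m n : nat) (g : nat -> nat -> bool) : Prop :=
  forall a b x, a < n -> b < n -> a != b -> m - 3 <= x ->
  exists r, [/\ r < m, r != x & g r a != g r b].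

Definition triple_isolating (m n : nat) (g : nat -> nat -> bool) : Prop :=
  forall a b c, a < n -> b < n -> c < n -> a != b -> a != c -> b != c ->
  exists2 r, r < m & g r a + g r b + g r c == 1.

Definition recursion_invariant (m n : nat) (g : nat -> nat -> bool) : Prop :=
  [/\ covering m n g, separating m n g & triple_isolating m n g].

Lemma small_set_shapes (T : finType) (S : {set T}) : S != set0 -> #|S| <= 3 ->
  [\/ exists a, S = [set a],
      exists a b, a != b /\ S = [set a; b]
    | exists a b c, [/\ a != b, a != c, b != c & S = [set a; b; c]]].
Proof.
rewrite -cards_eq0 => S0 S3.
have /or3P[/cards1P S1 | /cards2P S2 | card3] : [|| #|S| == 1, #|S| == 2 | #|S| == 3].
  by move: S0 S3; lia.
- by constructor 1.
- by constructor 2.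
have [a aS] : exists a, a \in S by apply/set0Pn; rewrite -cards_eq0.
have /cards2P [b [c [bc Sa]]] : #|S :\ a| == 2.
  by move: card3; rewrite (cardsD1 a S) aS; lia.
have : b \in S :\ a by rewrite Sa !inE eqxx.
have : c \in S :\ a by rewrite Sa !inE eqxx orbT.
rewrite !inE => /andP[ca _] /andP[ba _].
constructor 3; exists a, b, c; split; rewrite 1?[a == _]eq_sym //.
by rewrite -setUA -Sa setD1K.
Qed.

Lemma sum_set3 (T : finType) (a b c : T) (F : T -> nat) :
  a != b -> a != c -> b != c -> \sum_(j in [set a; b; c]) F j = F a + F b + F c.
Proof.
move=> ab ac bc; rewrite -setUA.
have a_new : a \notin [set b; c] by rewrite !inE negb_or ab ac.
have b_new : b \notin [set c] by rewrite inE.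
by rewrite big_setU1 //= big_setU1 //= big_set1 addnA.
Qed.

Lemma card_row_support m n (f : nat -> nat -> bool) (r : 'I_m) (S : {set 'I_n}) :
  #|[set j in S | mx_of m n f r j]| = \sum_(j in S) f r j.
Proof.
rewrite -sum1_card big_mkcond [RHS]big_mkcond /=.
by apply: eq_bigr => j _; rewrite !inE mxE; case: (j \in S); case: (f r j).
Qed.

Lemma invariant_decodable m n (f : nat -> nat -> bool) :
  recursion_invariant m n f -> decodable 3 (mx_of m n f).
Proof.
case=> cov sep iso S [S0 no_single]; rewrite ltnNge; apply/negP => S_small.
have row_sum (r : nat) (r_lt : r < m) : \sum_(j in S) f r j != 1.
  by rewrite -(card_row_support f (Ordinal r_lt)).
move: row_sum; case: (small_set_shapes S0 S_small) =>
  [[a ->] | [a [b [ab ->]]] | [a [b [c [ab ac bc ->]]]]].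
- have [r r_lt fra] := cov a (ltn_ord a).
  by move=> /(_ r r_lt); rewrite big_set1 fra.
- have [r [r_lt _ differ]] := sep a b m (ltn_ord a) (ltn_ord b) ab (leq_subr 3 m).
  move=> /(_ r r_lt); rewrite big_setU1 ?big_set1 ?inE //=.
  by move: differ; case: (f r a); case: (f r b).
- have [r r_lt odd_row] := iso a b c (ltn_ord a) (ltn_ord b) (ltn_ord c) ab ac bc.
  by move=> /(_ r r_lt); rewrite sum_set3 // odd_row.
Qed.

Lemma triple_isolating_sorted m n (g : nat -> nat -> bool) :
  (forall a b c, a < b -> b < c -> c < n ->
     exists2 r, r < m & g r a + g r b + g r c == 1) ->
  triple_isolating m n g.
Proof.
move=> sorted a b c a_lt b_lt c_lt ab ac bc.
have [x [y [z [[xy yz zn] same_sum]]]] : exists x y z,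
    [/\ x < y, y < z & z < n] /\
    forall r, g r a + g r b + g r c = g r x + g r y + g r z.
  case: (ltngtP a b) => hab; case: (ltngtP a c) => hac; case: (ltngtP b c) => hbc;
    try lia.
  - by exists a, b, c; split => // r.
  - by exists a, c, b; split => // r; lia.
  - by exists c, a, b; split => // r; lia.
  - by exists b, a, c; split => // r; lia.
  - by exists b, c, a; split => // r; lia.
  - by exists c, b, a; split => // r; lia.
have [r r_lt odd_row] := sorted x y z xy yz zn.
by exists r; rewrite // same_sum.
Qed.

(* The recursive step: M_m = [L | R] where the 3 columns of L are the unit
   vectors of the last three rows, and R consists of i blocks of k columns;
   row q < i of R is 1 exactly on block q, and rows i.. of R repeat M_{m-i}
   (here given by g) in every block. *)
Section RecursiveStep.
Variables (m i k : nat) (g : nat -> nat -> bool).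
Hypotheses (m_ge3 : 3 <= m) (i_le : i <= m - 3).

Local Notation h := (fstep m i k g).
Local Notation n := (3 + i * k).
Local Notation block col := ((col - 3) %/ k).
Local Notation offset col := ((col - 3) %% k).
Local Notation in_block q col := ((3 <= col) && (block col == q)).

Lemma fstep_left r col : col < 3 -> h r col = (r == m - 3 + col).
Proof. by move=> col_lt3; rewrite /fstep col_lt3; apply/idP/idP; lia. Qed.

Lemma fstep_top r col : r < i -> h r col = in_block r col.
Proof.
rewrite /fstep => r_lt; case: ltnP => [col_lt3 | col_ge3] /=; last by rewrite r_lt.
by have -> : m - 3 <= r = false by lia.
Qed.

Lemma fstep_bottom r col : i <= r -> 3 <= col -> h r col = g (r - i) (offset col).
Proof.
rewrite /fstep => r_ge col_ge3.
have -> : col < 3 = false by lia.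
by have -> : r < i = false by lia.
Qed.

Lemma block_bounds col : 3 <= col -> col < n -> block col < i /\ offset col < k.
Proof.
move=> col_ge3 col_lt; have k_gt0 : 0 < k by nia.
by rewrite ltn_divLR // ltn_pmod //; split=> //; lia.
Qed.

Lemma offset_separates a b : 3 <= a -> 3 <= b -> a != b ->
  block a = block b -> offset a != offset b.
Proof.
move=> a_ge3 b_ge3 ab same_block; apply: contraNneq ab => same_offset.
have := divn_eq (a - 3) k; have := divn_eq (b - 3) k.
by rewrite same_block same_offset; lia.
Qed.

(* Top rows are never among the last
   three rows, which carry the identity block of L. *)
Lemma top_row_lt r : r < i -> r < m.
Proof. lia. Qed.

Lemma top_row_ne r x : r < i -> m - 3 <= x -> r != x.
Proof. lia. Qed.

Lemma bottom_row_lt r : r < m - i -> r + i < m.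
Proof. lia. Qed.

Lemma bottom_row_ne r x : i <= x -> r != x - i -> r + i != x.
Proof. lia. Qed.

(* The top row of the block of a column c has a 1 in c, and a 0 in every
   column outside that block. *)
Lemma top_row_isolates a b c : 3 <= c -> c < n ->
  ~~ in_block (block c) a -> ~~ in_block (block c) b ->
  exists2 r, r < m & h r a + h r b + h r c == 1.
Proof.
move=> c_ge3 c_lt a_out b_out; have [blk_lt _] := block_bounds c_ge3 c_lt.
exists (block c); first exact: top_row_lt.
by rewrite !fstep_top // (negbTE a_out) (negbTE b_out) c_ge3 eqxx.
Qed.

Lemma top_row_separates a b x : 3 <= b -> b < n -> ~~ in_block (block b) a ->
  m - 3 <= x -> exists r, [/\ r < m, r != x & h r a != h r b].
Proof.
move=> b_ge3 b_lt a_out x_ge; have [blk_lt _] := block_bounds b_ge3 b_lt.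
exists (block b); split; [exact: top_row_lt | exact: top_row_ne |].
by rewrite !fstep_top // (negbTE a_out) b_ge3 eqxx.
Qed.

Lemma left_out q col : col < 3 -> ~~ in_block q col.
Proof. by move=> col_lt3; rewrite leqNgt col_lt3. Qed.

(* Each column of M_m contains a 1: its identity row, or its top row. *)
Lemma fstep_covering : covering m n h.
Proof.
move=> a a_lt; have [a_lt3 | a_ge3] := ltnP a 3.
  by exists (m - 3 + a); rewrite ?fstep_left //; lia.
have [blk_lt _] := block_bounds a_ge3 a_lt.
by exists (block a); [exact: top_row_lt | rewrite fstep_top // a_ge3 eqxx].
Qed.

(* Two columns of L are told apart by their identity rows (one of which is
   not the deleted row x); a column outside the block of a column b of R is
   told apart from b by the top row of b; two columns of the same block are
   told apart inside M_{m-i}, whose last three rows are those of M_m. *)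
Lemma fstep_separating : separating (m - i) k g -> separating m n h.
Proof.
move=> sep a b x a_lt b_lt ab x_ge.
have [a_lt3 | a_ge3] := ltnP a 3; have [b_lt3 | b_ge3] := ltnP b 3.
- exists (if x == m - 3 + a then m - 3 + b else m - 3 + a).
  by rewrite !fstep_left //; case: eqP; split; lia.
- exact: top_row_separates b_ge3 b_lt (left_out _ a_lt3) x_ge.
- have [r [r_lt r_ne differ]] := top_row_separates a_ge3 a_lt
    (left_out _ b_lt3) x_ge.
  by exists r; split; rewrite // eq_sym.
have [same_blk | diff_blk] := eqVneq (block a) (block b); last first.
  by apply: top_row_separates => //; rewrite a_ge3 diff_blk.
have [_ off_a_lt] := block_bounds a_ge3 a_lt.
have [_ off_b_lt] := block_bounds b_ge3 b_lt.
have x_ge' : m - i - 3 <= x - i by rewrite subnAC leq_sub2r.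
have i_le_x : i <= x := leq_trans i_le x_ge.
have [r [r_lt r_ne differ]] := sep _ _ (x - i) off_a_lt off_b_lt
  (offset_separates a_ge3 b_ge3 ab same_blk) x_ge'.
exists (r + i); split; [exact: bottom_row_lt | exact: bottom_row_ne |].
by rewrite !fstep_bottom ?addnK ?leq_addl.
Qed.

(* If a column a of L and two columns b, c of one block are given, a row of
   M_{m-i} separating the offsets of b and c, chosen other than the identity
   row of a (where a has its only 1), has exactly one 1 among a, b, c. *)
Lemma left_and_block_pair_isolated a b c : separating (m - i) k g ->
  a < 3 -> 3 <= b -> 3 <= c -> b < n -> c < n -> b != c -> block b = block c ->
  exists2 r, r < m & h r a + h r b + h r c == 1.
Proof.
move=> sep a_lt3 b_ge3 c_ge3 b_lt c_lt bc same_bc.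
have [_ off_b_lt] := block_bounds b_ge3 b_lt.
have [_ off_c_lt] := block_bounds c_ge3 c_lt.
have x_ge : m - i - 3 <= m - 3 + a - i by rewrite subnAC leq_sub2r ?leq_addr.
have [r [r_lt r_ne differ]] := sep _ _ _ off_b_lt off_c_lt
  (offset_separates b_ge3 c_ge3 bc same_bc) x_ge.
exists (r + i); first exact: bottom_row_lt.
have /negbTE a_zero : r + i != m - 3 + a.
  by apply: bottom_row_ne; rewrite // (leq_trans i_le) ?leq_addr.
rewrite fstep_left // a_zero !fstep_bottom ?addnK ?leq_addl //.
by move: differ; case: (g r _); case: (g r _).
Qed.

Lemma block_triple_isolated a b c : triple_isolating (m - i) k g ->
  3 <= a -> 3 <= b -> 3 <= c -> a < n -> b < n -> c < n ->
  a != b -> a != c -> b != c -> block a = block b -> block a = block c ->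
  exists2 r, r < m & h r a + h r b + h r c == 1.
Proof.
move=> iso a_ge3 b_ge3 c_ge3 a_lt b_lt c_lt ab ac bc same_ab same_ac.
have [_ off_a_lt] := block_bounds a_ge3 a_lt.
have [_ off_b_lt] := block_bounds b_ge3 b_lt.
have [_ off_c_lt] := block_bounds c_ge3 c_lt.
have [r r_lt odd_row] := iso _ _ _ off_a_lt off_b_lt off_c_lt
  (offset_separates a_ge3 b_ge3 ab same_ab)
  (offset_separates a_ge3 c_ge3 ac same_ac)
  (offset_separates b_ge3 c_ge3 bc (etrans (esym same_ab) same_ac)).
exists (r + i); first exact: bottom_row_lt.
by rewrite !fstep_bottom ?addnK ?leq_addl.
Qed.

(* For a < b < c: three columns of L are isolated by the identity row of a;
   a column of R whose block contains no other column of the triple is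
   isolated by its top row; the remaining configurations (a in L with b, c in
   one block, or a, b, c in one block) are handled by the two lemmas above. *)
Lemma fstep_triple_isolating : separating (m - i) k g ->
  triple_isolating (m - i) k g -> triple_isolating m n h.
Proof.
move=> sep iso; apply: triple_isolating_sorted => a b c ab bc c_lt.
have [b_lt a_lt] : b < n /\ a < n by lia.
have [ab' ac' bc'] : [/\ a != b, a != c & b != c] by split; lia.
have [c_lt3 | c_ge3] := ltnP c 3.
  by exists (m - 3 + a); rewrite ?fstep_left //; lia.
have [b_lt3 | b_ge3] := ltnP b 3.
  have a_lt3 : a < 3 by lia.
  exact: top_row_isolates c_ge3 c_lt (left_out _ a_lt3) (left_out _ b_lt3).
have [a_lt3 | a_ge3] := ltnP a 3.
  have [same_bc | diff_bc] := eqVneq (block b) (block c).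
    exact: left_and_block_pair_isolated.
  by apply: (top_row_isolates c_ge3 c_lt (left_out _ a_lt3)); rewrite b_ge3 diff_bc.
have [same_ab | diff_ab] := eqVneq (block a) (block b).
  have [same_ac | diff_ac] := eqVneq (block a) (block c).
    exact: block_triple_isolated.
  by apply: top_row_isolates c_ge3 c_lt _ _; rewrite ?a_ge3 ?b_ge3 -?same_ab diff_ac.
have [same_ac | diff_ac] := eqVneq (block a) (block c).
  have [r r_lt odd_row] := top_row_isolates (a := a) (b := c) b_ge3 b_lt
    ltac:(by rewrite a_ge3 diff_ab) ltac:(by rewrite c_ge3 -same_ac diff_ab).
  by exists r; rewrite // addnAC.
have [r r_lt odd_row] := top_row_isolates (a := b) (b := c) a_ge3 a_lt
  ltac:(by rewrite b_ge3 eq_sym diff_ab) ltac:(by rewrite c_ge3 eq_sym diff_ac).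
by exists r; rewrite // -addnA addnC.
Qed.

Lemma fstep_invariant :
  recursion_invariant (m - i) k g -> recursion_invariant m n h.
Proof.
case=> _ sep iso; split; [exact: fstep_covering | exact: fstep_separating |].
exact: fstep_triple_isolating.
Qed.

End RecursiveStep.

Definition coveringb (m n : nat) (g : nat -> nat -> bool) : bool :=
  all (fun a => has (fun r => g r a) (iota 0 m)) (iota 0 n).

Definition separatingb (m n : nat) (g : nat -> nat -> bool) : bool :=
  all (fun a => all (fun b => all (fun x =>
    (a != b) && (m - 3 <= x) ==>
      has (fun r => (r != x) && (g r a != g r b)) (iota 0 m))
    (iota 0 m.+1)) (iota 0 n)) (iota 0 n).

Definition triple_isolatingb (m n : nat) (g : nat -> nat -> bool) : bool :=
  all (fun a => all (fun b => all (fun c =>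
    [&& a != b, a != c & b != c] ==>
      has (fun r => g r a + g r b + g r c == 1) (iota 0 m))
    (iota 0 n)) (iota 0 n)) (iota 0 n).

Lemma coveringP m n (g : nat -> nat -> bool) : coveringb m n g -> covering m n g.
Proof.
move=> /allP cov a a_lt; have /hasP[r] := cov a ltac:(by rewrite mem_iota).
by rewrite mem_iota => /andP[_ r_lt] gra; exists r.
Qed.

(* Deleting a row x >= m deletes nothing, so only x <= m needs checking. *)
Lemma separatingP m n (g : nat -> nat -> bool) :
  separatingb m n g -> separating m n g.
Proof.
move=> /allP sep a b x a_lt b_lt ab x_ge.
have /allP/(_ b) := sep a ltac:(by rewrite mem_iota).
rewrite mem_iota => /(_ b_lt) /allP /(_ (minn x m)).
rewrite mem_iota ab /= => /(_ ltac:(lia)) /implyP /(_ ltac:(lia)) /hasP[r].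
rewrite mem_iota => /andP[_ r_lt] /andP[r_ne differ].
by exists r; split=> //; lia.
Qed.

Lemma triple_isolatingP m n (g : nat -> nat -> bool) :
  triple_isolatingb m n g -> triple_isolating m n g.
Proof.
move=> /allP iso a b c a_lt b_lt c_lt ab ac bc.
have /allP/(_ b) := iso a ltac:(by rewrite mem_iota).
rewrite mem_iota => /(_ b_lt) /allP /(_ c).
rewrite mem_iota => /(_ c_lt) /implyP /(_ ltac:(by rewrite ab ac bc)) /hasP[r].
by rewrite mem_iota => /andP[_ r_lt] odd_row; exists r.
Qed.

Lemma invariant_of_checks m n (g : nat -> nat -> bool) :
  [&& coveringb m n g, separatingb m n g & triple_isolatingb m n g] ->
  recursion_invariant m n g.
Proof.
by case/and3P=> /coveringP ? /separatingP ? /triple_isolatingP ?; split.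
Qed.

Lemma invariant_M3 : recursion_invariant 3 4 f3.
Proof. by apply: invariant_of_checks; vm_compute. Qed.

Lemma invariant_M4 : recursion_invariant 4 7 f4.
Proof. by apply: invariant_of_checks; vm_compute. Qed.

(* Every matrix M_m of the recursion satisfies the invariant; neither the
   maximality of i nor the value of c plays a role. *)
Lemma Mrec_invariant m n (f : nat -> nat -> bool) :
  Mrec m n f -> recursion_invariant m n f.
Proof.
elim=> [| | m' i c g m_ge5 _ i_le _ _ _ IH];
  [exact: invariant_M3 | exact: invariant_M4 |].
by apply: fstep_invariant => //; apply: leq_trans m_ge5.
Qed.

Theorem lemma5p3 (m n : nat) (f : nat -> nat -> bool) :
  3 <= m -> Mrec m n f -> decodable 3 (mx_of m n f).
Proof. by move=> _ /Mrec_invariant; apply: invariant_decodable. Qed.
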